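(* Let $1\le\beta<\sqrt{5/3}$, and let $\sigma,\sigma_0:[n]\to[K]$ be assignments all of whose community sizes lie in $[\frac{n}{\beta K},\frac{\beta n}{K}]$, with $d(\sigma,\sigma_0)=m$ for an integer $0<m<n$. Then $$\alpha(\sigma;\sigma_0)\wedge\gamma(\sigma;\sigma_0)\ge\begin{cases}\frac{nm}{K\beta}-m^2, & m\le\frac{n}{2K},\\ \frac{c_\beta nm}{K}, & m>\frac n{2K},\end{cases}\qquad c_\beta=\frac{(5-3\beta^2)^2}{2\beta(1+3(5-3\beta^2)^2)}.$$
   Context: $d(\sigma_1,\sigma_2)=\min_\delta d_H(\sigma_1,\delta\circ\sigma_2)$ over permutations $\delta$ of $[K]$, $d_H$ the Hamming distance. $\alpha(\sigma;\sigma_0)=|\{(i,j):i<j,\ \sigma_0(i)=\sigma_0(j),\ \sigma(i)\ne\sigma(j)\}|$ and $\gamma(\sigma;\sigma_0)=|\{(i,j):i<j,\ \sigma_0(i)\ne\sigma_0(j),\ \sigma(i)=\sigma(j)\}|$. *)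

From HB Require Import structures.
From mathcomp Require Import all_boot all_order all_fingroup all_algebra.
Set Implicit Arguments. Unset Strict Implicit. Unset Printing Implicit Defensive.
Import Order.TTheory GRing.Theory Num.Theory.

Definition hamming (n K : nat) (s1 s2 : 'I_n -> 'I_K) : nat :=
  #|[set i : 'I_n | s1 i != s2 i]|.

(* d(s1,s2) = min over permutations delta of [K] of d_H(s1, delta o s2).
   The default n of the min is harmless: every Hamming distance is <= n
   and {perm 'I_K} is nonempty. *)
Definition assign_dist (n K : nat) (s1 s2 : 'I_n -> 'I_K) : nat :=
  \big[minn/n]_(delta : {perm 'I_K}) hamming s1 (fun i => delta (s2 i)).

Definition alpha_pairs (n K : nat) (s s0 : 'I_n -> 'I_K) : nat :=
  #|[set p : 'I_n * 'I_n | [&& p.1 < p.2, s0 p.1 == s0 p.2 & s p.1 != s p.2]]|.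

Definition gamma_pairs (n K : nat) (s s0 : 'I_n -> 'I_K) : nat :=
  #|[set p : 'I_n * 'I_n | [&& p.1 < p.2, s0 p.1 != s0 p.2 & s p.1 == s p.2]]|.

Definition comm_size (n K : nat) (s : 'I_n -> 'I_K) (k : 'I_K) : nat :=
  #|[set i : 'I_n | s i == k]|.

(* Relabel sigma0 by a permutation attaining d(sigma, sigma0) = m: then sigma and
   t := delta o sigma0 differ at exactly m points, and no transposition of labels
   decreases their Hamming distance, i.e. the confusion counts satisfy
   N_ab + N_ba <= N_aa + N_bb.
   For a misclassified point i, count the points j of its t-community that sigma
   separates from i, counting twice those that sigma classifies correctly; summed
   over the misclassified points this counts every split pair at most twice, so it
   is at most 2 alpha.  The swap inequality and the bounds L <= community size <= U
   bound each term below by L - U/2 and by 2 (L - m), whence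
   4 alpha >= m (2L - U) and alpha >= m (L - m).  As gamma(sigma; sigma0) =
   alpha(sigma0; sigma) and everything is symmetric, gamma obeys the same bounds.
   With L = n/(beta K) and U = beta n/K the second bound is the first case of the
   theorem, and the first gives the second case because c_beta <= (2/beta - beta)/4. *)

From mathcomp Require Import all_boot all_order all_fingroup all_algebra.
From mathcomp Require Import zify ring lra.
Import Order.TTheory GRing.Theory Num.Theory.
Set Implicit Arguments. Unset Strict Implicit. Unset Printing Implicit Defensive.

Lemma card_set_nat_sum (T : finType) (P : pred T) : #|[set x | P x]| = \sum_x P x.
Proof. by rewrite -sum1dep_card big_mkcond; apply: eq_bigr => x _; case: (P x). Qed.

Section Relabelling.

Variables n K : nat.
Implicit Types (s t : 'I_n -> 'I_K) (d : {perm 'I_K}).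

Definition optimal_relabelling s t :=
  forall d, (hamming s t <= hamming s (d \o t))%N.

Lemma eq_hamming s s' t t' : s =1 s' -> t =1 t' -> hamming s t = hamming s' t'.
Proof. by move=> eq_s eq_t; apply: eq_card => i; rewrite !inE eq_s eq_t. Qed.

Lemma hamming_sym s t : hamming s t = hamming t s.
Proof. by apply: eq_card => i; rewrite !inE eq_sym. Qed.

Lemma hamming_relabel d s t : hamming (d \o s) (d \o t) = hamming s t.
Proof. by apply: eq_card => i; rewrite !inE /= (inj_eq perm_inj). Qed.

Lemma assign_dist_le_hamming s t d : (assign_dist s t <= hamming s (d \o t))%N.
Proof.
rewrite /assign_dist; elim: (index_enum _) (mem_index_enum d) => // d' r IH.
rewrite inE big_cons => /orP[/eqP<-|/IH]; first exact: geq_minl.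
exact: leq_trans (geq_minr _ _).
Qed.

Lemma assign_dist_attained s t :
  exists d, hamming s (d \o t) = assign_dist s t.
Proof.
suff [d le_d] : exists d, (hamming s (d \o t) <= assign_dist s t)%N.
  by exists d; apply/eqP; rewrite eqn_leq le_d assign_dist_le_hamming.
rewrite /assign_dist.
apply: (big_ind (fun x => exists d, hamming s (d \o t) <= x)%N).
- by exists 1%g; rewrite -[X in (_ <= X)%N]card_ord max_card.
- move=> x y [dx le_x] [dy le_y]; rewrite /minn.
  by case: ltnP => _; [exists dx | exists dy].
- by move=> d _; exists d.
Qed.

Lemma optimal_relabelling_sym s t :
  optimal_relabelling s t -> optimal_relabelling t s.
Proof.
move=> opt d; rewrite hamming_sym (hamming_sym t) -(hamming_relabel d^-1%g (d \o s)).
by rewrite (@eq_hamming (d^-1%g \o (d \o s)) s _ (d^-1%g \o t)) // => i; rewrite /= permK.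
Qed.

Lemma exists_optimal_relabelling s t :
  exists d, hamming s (d \o t) = assign_dist s t /\
            optimal_relabelling s (d \o t).
Proof.
have [d0 hd0] := assign_dist_attained s t; exists d0; split => // d.
rewrite hd0 (@eq_hamming _ s _ ((d0 * d)%g \o t)) ?assign_dist_le_hamming //.
by move=> i; rewrite /= permM.
Qed.

Lemma comm_size_relabel d t k : comm_size (d \o t) k = comm_size t (d^-1%g k).
Proof. by apply: eq_card => i; rewrite !inE /= -[RHS](inj_eq (@perm_inj _ d)) permKV. Qed.

Lemma alpha_pairs_relabell d s t : alpha_pairs (d \o s) t = alpha_pairs s t.
Proof. by apply: eq_card => p; rewrite !inE /= (inj_eq perm_inj). Qed.

Lemma alpha_pairs_relabelr d s t : alpha_pairs s (d \o t) = alpha_pairs s t.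
Proof. by apply: eq_card => p; rewrite !inE /= (inj_eq perm_inj). Qed.

Lemma gamma_pairsE s t : gamma_pairs s t = alpha_pairs t s.
Proof.
apply: eq_card => p; rewrite !inE.
by case: (_ < _)%N; case: (_ == _); case: (_ == _).
Qed.

End Relabelling.

Lemma tperm_mismatch (T : finType) (a b x y : T) :
  ((y != x) + ((x == a) && (y == a)) + ((x == b) && (y == b)) =
   (y != tperm a b x) + ((x == a) && (y == b)) + ((x == b) && (y == a)))%N.
Proof.
have [<-|ab] := eqVneq a b; first by rewrite tperm1 perm1.
have [->|xa] := eqVneq x a.
  by rewrite tpermL (negbTE ab) /=; case: (y == a); case: (y == b).
have [->|xb] := eqVneq x b.
  by rewrite tpermR /=; case: (y == a); case: (y == b).
by rewrite tpermD // eq_sym.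
Qed.

Section OptimalRelabelling.

Variables n K : nat.
Variables s t : 'I_n -> 'I_K.

Definition confusion (a b : 'I_K) : nat := \sum_j ((t j == a) && (s j == b)).

Definition split_partners (i : 'I_n) : nat := \sum_j ((t i == t j) && (s i != s j)).

Definition split_weight (i : 'I_n) : nat :=
  split_partners i + \sum_j ((s j == t j) * ((t i == t j) && (s i != s j))).

Lemma hamming_tperm a b :
  (hamming s t + confusion a a + confusion b b =
   hamming s (tperm a b \o t) + confusion a b + confusion b a)%N.
Proof.
rewrite /hamming /confusion !card_set_nat_sum -!big_split.
by apply: eq_bigr => j _; exact: tperm_mismatch.
Qed.

Lemma double_alpha_pairs : (2 * alpha_pairs s t = \sum_i split_partners i)%N.
Proof.
set C := fun i j => (t i == t j) && (s i != s j).
have C_sym i j : C i j = C j i by rewrite /C eq_sym (eq_sym (s i)).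
have -> : alpha_pairs s t = (\sum_(i : 'I_n) \sum_(j : 'I_n) ((i < j)%N && C i j))%N.
  by rewrite /alpha_pairs card_set_nat_sum pair_big.
have -> : (\sum_i split_partners i =
           \sum_(i : 'I_n) \sum_(j : 'I_n) ((i < j)%N && C i j) +
           \sum_(i : 'I_n) \sum_(j : 'I_n) ((j < i)%N && C i j))%N.
  rewrite -big_split; apply: eq_bigr => i _; rewrite -big_split.
  apply: eq_bigr => j _ /=; case: (ltngtP i j) => [||/ord_inj ->] //=.
  - by rewrite addn0.
  - by rewrite /C !eqxx.
rewrite [X in (_ + X)%N]exchange_big /=.
under [X in (_ + X)%N]eq_bigr do under eq_bigr do rewrite C_sym.
by rewrite addnn mul2n.
Qed.

Lemma sum_split_weight_le :
  (\sum_(i | s i != t i) split_weight i <= 2 * alpha_pairs s t)%N.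
Proof.
set C := fun i j => (t i == t j) && (s i != s j).
have C_sym i j : C i j = C j i by rewrite /C eq_sym (eq_sym (s i)).
rewrite double_alpha_pairs big_mkcond /=.
have -> : (\sum_i (if s i != t i then split_weight i else 0) =
           \sum_i \sum_j ((s i != t i) * C i j + (s i != t i) * ((s j == t j) * C i j)))%N.
  apply: eq_bigr => i _; rewrite /split_weight /split_partners -big_split /=.
  by case: (s i != t i); [apply: eq_bigr => j _; rewrite !mul1n | rewrite big1].
under eq_bigr do rewrite big_split; rewrite big_split /=.
have -> : (\sum_i \sum_j ((s i != t i) * ((s j == t j) * C i j)) =
           \sum_i \sum_j ((s i == t i) * ((s j != t j) * C i j)))%N.
  rewrite exchange_big; apply: eq_bigr => i _; apply: eq_bigr => j _.
  by rewrite C_sym mulnCA.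
rewrite -big_split; apply: leq_sum => i _; rewrite -big_split; apply: leq_sum => j _.
by rewrite -/(C i j) /=; case: (s i == t i); case: (s j == t j); case: (C i j).
Qed.

Lemma split_partners_add_confusion i :
  (split_partners i + confusion (t i) (s i) = comm_size t (t i))%N.
Proof.
rewrite /split_partners /confusion /comm_size card_set_nat_sum -big_split.
apply: eq_bigr => j _ /=; rewrite !(eq_sym (t j)) !(eq_sym (s j)).
by case: (t i == t j); case: (s i == s j).
Qed.

Lemma split_weight_mismatch i : s i != t i ->
  split_weight i = (split_partners i + confusion (t i) (t i))%N.
Proof.
move=> mis; congr (_ + _)%N; apply: eq_bigr => j _.
rewrite (eq_sym (t i)); have [->|] := eqVneq (t j) (t i); last by rewrite muln0.
by case: eqP => [->|]; rewrite ?mis.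
Qed.

Lemma confusion_le_split_partners i : s i != t i ->
  (confusion (t i) (t i) <= split_partners i)%N.
Proof.
move=> mis; apply: leq_sum => j _; rewrite (eq_sym (t i)).
by case: (t j == t i) => //=; case: eqP => // ->; rewrite mis.
Qed.

Lemma confusion_add_le_comm_size a b : a != b ->
  (confusion a b + confusion b b <= comm_size s b)%N.
Proof.
move=> ab; rewrite /comm_size card_set_nat_sum -big_split; apply: leq_sum => j _ /=.
case: (s j == b); rewrite ?andbF ?andbT //=.
by case: eqP => [->|_]; [rewrite (negbTE ab) | case: (_ == _)].
Qed.

Lemma comm_size_le_confusion_add_hamming a :
  (comm_size t a <= confusion a a + hamming s t)%N.
Proof.
rewrite /comm_size /hamming !card_set_nat_sum -big_split; apply: leq_sum => j _ /=.
by case: eqP => // ->; case: (s j == a).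
Qed.

Lemma split_weight_lb_hamming i : s i != t i ->
  (2 * comm_size t (t i) <= split_weight i + 2 * hamming s t)%N.
Proof.
move=> mis; rewrite split_weight_mismatch //.
have := confusion_le_split_partners mis.
have := comm_size_le_confusion_add_hamming (t i); lia.
Qed.

Hypothesis opt : optimal_relabelling s t.

Lemma confusion_swap a b :
  (confusion a b + confusion b a <= confusion a a + confusion b b)%N.
Proof.
have le_h : (hamming s t <= hamming s (tperm a b \o t))%N := opt _.
have := hamming_tperm a b; lia.
Qed.

Lemma split_weight_lb_comm_size i : s i != t i ->
  (2 * comm_size t (t i) <= 2 * split_weight i + comm_size s (s i))%N.
Proof.
move=> mis; rewrite split_weight_mismatch // -split_partners_add_confusion.
have ts : t i != s i by rewrite eq_sym.
have := confusion_swap (t i) (s i).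
have := confusion_add_le_comm_size ts; lia.
Qed.

Local Open Scope ring_scope.

Lemma hamming_mul_le_sum (R : numDomainType) (c : R) (w : 'I_n -> nat) :
  (forall i, s i != t i -> c <= (w i)%:R) ->
  (hamming s t)%:R * c <= (\sum_(i | s i != t i) w i)%:R.
Proof.
move=> le_c; rewrite natr_sum /hamming mulr_natl -sumr_const.
rewrite (eq_bigl (fun i => s i != t i)) => [|i]; last by rewrite inE.
exact: ler_sum.
Qed.

Lemma alpha_pairs_lower_bounds (R : realFieldType) (L U : R) :
  (forall k, L <= (comm_size t k)%:R) -> (forall k, (comm_size s k)%:R <= U) ->
  (hamming s t)%:R * (2 * L - U) <= 4 * (alpha_pairs s t)%:R /\
  (hamming s t)%:R * (L - (hamming s t)%:R) <= (alpha_pairs s t)%:R.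
Proof.
move=> le_L le_U.
have le_alpha :
    (\sum_(i | s i != t i) split_weight i)%:R <= 2 * (alpha_pairs s t)%:R :> R.
  by rewrite -natrM ler_nat sum_split_weight_le.
split.
- have le_sum := @hamming_mul_le_sum R (2 * L - U) (fun i => 2 * split_weight i)%N.
  rewrite -big_distrr natrM /= in le_sum.
  suff : (hamming s t)%:R * (2 * L - U) <=
         2 * (\sum_(i | s i != t i) split_weight i)%:R by lra.
  apply: le_sum => i mis.
  have := split_weight_lb_comm_size mis; rewrite -(ler_nat R) natrD !natrM.
  have := le_L (t i); have := le_U (s i); lra.
- have le_sum := @hamming_mul_le_sum R (2 * (L - (hamming s t)%:R)) split_weight.
  suff : (hamming s t)%:R * (2 * (L - (hamming s t)%:R)) <=
         (\sum_(i | s i != t i) split_weight i)%:R by rewrite mulrCA; lra.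
  apply: le_sum => i mis.
  have := split_weight_lb_hamming mis; rewrite -(ler_nat R) natrD !natrM.
  have := le_L (t i); lra.
Qed.

End OptimalRelabelling.

Local Open Scope ring_scope.

Lemma min_alpha_gamma_lower_bounds (R : realFieldType) n K (s s0 : 'I_n -> 'I_K)
    (L U : R) :
  (forall k, L <= (comm_size s k)%:R <= U) ->
  (forall k, L <= (comm_size s0 k)%:R <= U) ->
  let m := assign_dist s s0 in
  let ag := minn (alpha_pairs s s0) (gamma_pairs s s0) in
  m%:R * (2 * L - U) <= 4 * ag%:R /\ m%:R * (L - m%:R) <= ag%:R.
Proof.
move=> bd_s bd_s0 m ag.
have [d [dist_t opt]] := exists_optimal_relabelling s s0.
set t := d \o s0 in dist_t opt.
have bd_t k : L <= (comm_size t k)%:R <= U by rewrite comm_size_relabel.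
have [alpha4 alpha1] := alpha_pairs_lower_bounds opt
  (fun k => proj1 (andP (bd_t k))) (fun k => proj2 (andP (bd_s k))).
have [gamma4 gamma1] := alpha_pairs_lower_bounds (optimal_relabelling_sym opt)
  (fun k => proj1 (andP (bd_s k))) (fun k => proj2 (andP (bd_t k))).
rewrite dist_t alpha_pairs_relabelr in alpha4 alpha1.
rewrite hamming_sym dist_t alpha_pairs_relabell -gamma_pairsE in gamma4 gamma1.
by rewrite /ag /minn; case: ltnP.
Qed.

Lemma c_beta_le (R : realFieldType) (beta : R) : 0 < beta -> beta ^+ 2 <= 5 / 3 ->
  (5 - 3 * beta ^+ 2) ^+ 2 / (2 * beta * (1 + 3 * (5 - 3 * beta ^+ 2) ^+ 2))
    <= (2 / beta - beta) / 4.
Proof.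
move=> b_gt0 b2_le; set u := 5 - 3 * beta ^+ 2.
have u_ge0 : 0 <= u by rewrite /u; lra.
have den_gt0 : 0 < 2 * beta * (1 + 3 * u ^+ 2).
  by rewrite !mulr_gt0 //; nra.
rewrite ler_pdivrMr // (_ : _ / 4 * _ = (u + 1) * (1 + 3 * u ^+ 2) / 6); last first.
  by rewrite /u; field; rewrite gt_eqF.
have : 0 <= u * (u - 1 / 2) ^+ 2 by rewrite mulr_ge0 ?sqr_ge0.
nra.
Qed.

Unset Implicit Arguments.

Theorem lemma6 (R : rcfType) (n K m : nat) (beta : R)
    (sigma sigma0 : 'I_n -> 'I_K) :
  1 <= beta -> beta < Num.sqrt (5 / 3) ->
  (forall k : 'I_K,
      n%:R / (beta * K%:R) <= (comm_size sigma k)%:R <= beta * n%:R / K%:R) ->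
  (forall k : 'I_K,
      n%:R / (beta * K%:R) <= (comm_size sigma0 k)%:R <= beta * n%:R / K%:R) ->
  assign_dist sigma sigma0 = m ->
  (0 < m < n)%N ->
  let c_beta := (5 - 3 * beta ^+ 2) ^+ 2 /
                (2 * beta * (1 + 3 * (5 - 3 * beta ^+ 2) ^+ 2)) in
  let ag := minn (alpha_pairs sigma sigma0) (gamma_pairs sigma sigma0) in
  ((m%:R : R) <= n%:R / (2 * K%:R) ->
     (n%:R * m%:R / (K%:R * beta) : R) - m%:R ^+ 2 <= (ag%:R : R)) /\
  ((n%:R : R) / (2 * K%:R) < m%:R ->
     c_beta * n%:R * m%:R / K%:R <= (ag%:R : R)).
Proof.
move=> b_ge1 b_lt bd_sigma bd_sigma0 dist_m /andP[_ m_lt_n] c_beta ag.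
have b_gt0 : 0 < beta by lra.
have b2_le : beta ^+ 2 <= 5 / 3.
  rewrite -[5 / 3](@sqr_sqrtr R) ?expr2; last lra.
  by apply: ler_pM; rewrite ?ltW.
have K_neq0 : (K%:R : R) != 0.
  by rewrite pnatr_eq0 -lt0n (leq_ltn_trans _ (ltn_ord (sigma (Ordinal m_lt_n)))).
have [le4 le1] := min_alpha_gamma_lower_bounds bd_sigma bd_sigma0.
rewrite -/ag dist_m in le4 le1.
split=> _.
- suff -> : n%:R * m%:R / (K%:R * beta) - m%:R ^+ 2 =
            m%:R * (n%:R / (beta * K%:R) - m%:R) by [].
  by field; rewrite K_neq0 gt_eqF.
- have le_ag : m%:R * (n%:R / K%:R) * ((2 / beta - beta) / 4) <= ag%:R.
    have : m%:R * (n%:R / K%:R) * ((2 / beta - beta) / 4) =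
           m%:R * (2 * (n%:R / (beta * K%:R)) - beta * n%:R / K%:R) / 4.
      by field; rewrite K_neq0 gt_eqF.
    lra.
  apply: le_trans le_ag.
  rewrite (_ : c_beta * n%:R * m%:R / K%:R = m%:R * (n%:R / K%:R) * c_beta);
    last by field.
  by rewrite ler_wpM2l ?mulr_ge0 ?invr_ge0 //; apply: c_beta_le.
Qed.
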